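(* Fix $p\in(0,1)$. Suppose either (1) $\mathbb P(v\ge x)=L(x)x^{-a}$ for $x\ge0$, with $a>1$ and $L$ slowly varying (i.e. $\lim_{x\to\infty}L(tx)/L(x)=1$ for each $t>0$); or (2) $\mathbb P(v\ge x)=L(x)e^{-\delta x^\beta}$ for $x\ge0$, with $\beta\in(0,1/2)$, $\delta>0$ and $L$ slowly varying. Then $$\lim_{j\to\infty}\left|\frac{\mathbb P(\tilde v\ge j)}{\mathbb P(v\ge j/p)}-1\right|=0 .$$
   Context: Probabilistic model: $(B_n)_{n\ge1}$ is a sequence of i.i.d. Bernoulli random variables with parameter $p$, $v$ is a random variable with values in $\mathbb N$ independent of $(B_n)$, and $\tilde v=\sum_{\ell=1}^v B_\ell$. *)

From Stdlib Require Import Reals.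
Open Scope R_scope.

(* pmf q of an N-valued random variable v *)
Definition is_pmf (q : nat -> R) : Prop :=
  (forall n, 0 <= q n) /\ infinite_sum q 1.

(* P(Bin(n,p) >= j) = P(sum_{l=1}^n B_l >= j) *)
Definition binom_tail (p : R) (n j : nat) : R :=
  sum_f_R0 (fun k => if Nat.leb j k then C n k * p ^ k * (1 - p) ^ (n - k) else 0) n.

(* T x = P(v >= x) for real x *)
Definition is_tail_v (q : nat -> R) (T : R -> R) : Prop :=
  forall x : R,
    infinite_sum (fun n => if Rle_dec x (INR n) then q n else 0) (T x).

(* Tt j = P(vtilde >= j), vtilde = sum_{l=1}^v B_l, v independent of (B_l) *)
Definition is_tail_vtilde (q : nat -> R) (p : R) (Tt : nat -> R) : Prop :=
  forall j : nat,
    infinite_sum (fun n => q n * binom_tail p n j) (Tt j).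

Definition slowly_varying (L : R -> R) : Prop :=
  forall t : R, 0 < t ->
    forall eps : R, 0 < eps ->
      exists M : R, forall x : R, M < x -> Rabs (L (t * x) / L x - 1) < eps.

From Stdlib Require Import Reals Lra Lia ZArith ClassicalEpsilon Classical.
Open Scope R_scope.

(* Given [v = n], [vtilde] is Binomial(n,p),
   concentrated at [p n] with Chernoff deviations of order [sqrt n].  Hence, with
   [x = j / p] and a window [w = x^ga] with [1/2 < ga < 1],
     (1 - small) P(v >= x + w) <= P(vtilde >= j) <= P(v >= x - w) + error,
   and the theorem follows once [P(v >= x +- w) ~ P(v >= x)] and the error is
   negligible against [P(v >= x)].  Both regimes of the theorem are instances of
   [T = L G] with [L] slowly varying and [log G] Lipschitz with constant
   [K y^(-mu)] on [[y/2, y]] ([mu = 1] for [x^(-a)], [mu = 1 - beta] for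
   [exp (- delta x^beta)]); [beta < 1/2] is exactly what makes [mu > 1/2]. *)

Lemma exp_le_mono x y : x <= y -> exp x <= exp y.
Proof. intros [H|H]; [left; apply exp_increasing; auto | subst; lra]. Qed.

Lemma ln_le_mono x y : 0 < x -> x <= y -> ln x <= ln y.
Proof. intros Hx [H|H]; [left; apply ln_increasing; auto | subst; lra]. Qed.

Lemma ln_le_sub1 x : 0 < x -> ln x <= x - 1.
Proof. intros H. assert (H1 := exp_ineq1_le (ln x)). rewrite exp_ln in H1; lra. Qed.

(* Second-order upper bound for [exp] near 0, from [exp u * (1 - u) <= 1]. *)
Lemma exp_quad u : u <= 1/2 -> exp u <= 1 + u + 2 * u ^ 2.
Proof.
  intros Hu.
  assert (Hinv : exp u * (1 - u) <= 1).
  { assert (H := exp_ineq1_le (- u)).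
    replace 1 with (exp u * exp (- u)) at 2
      by (rewrite <- exp_plus, Rplus_opp_r; apply exp_0).
    apply Rmult_le_compat_l; [left; apply exp_pos | lra]. }
  assert (Hq : 1 <= (1 - u) * (1 + u + 2 * u ^ 2)).
  { assert (0 <= u ^ 2 * (1 - 2 * u)) by (apply Rmult_le_pos; [apply pow2_ge_0 | lra]). nra. }
  assert (Hp := exp_pos u).
  apply Rmult_le_reg_r with (1 - u); nra.
Qed.

Lemma exp_lin u : 0 <= u <= 1/2 -> exp u <= 1 + 2 * u.
Proof. intros H. assert (H1 := exp_quad u ltac:(lra)). nra. Qed.

Lemma exp_pow_INR x n : exp x ^ n = exp (INR n * x).
Proof.
  induction n as [|n IH]; [simpl; rewrite Rmult_0_l, exp_0; ring|].
  rewrite <- tech_pow_Rmult, IH, <- exp_plus, S_INR. f_equal; ring.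
Qed.

Lemma pow_le_exp u n : -1 <= u -> (1 + u) ^ n <= exp (INR n * u).
Proof.
  intros Hu. rewrite <- exp_pow_INR. apply pow_incr. split; [lra | apply exp_ineq1_le].
Qed.

Lemma nat_between x : 0 <= x -> exists N : nat, x < INR N <= x + 1.
Proof.
  intros Hx. destruct (archimed x) as [H1 H2].
  exists (Z.to_nat (up x)). rewrite INR_IZR_INZ, Z2Nat.id; [lra|].
  apply le_IZR. lra.
Qed.

Lemma nat_gt M : exists m : nat, M < INR m.
Proof.
  destruct (nat_between (Rabs M) (Rabs_pos M)) as [m [Hm _]].
  exists m. assert (M <= Rabs M) by apply RRle_abs. lra.
Qed.

(* Bookkeeping for [sum_f_R0] (note that [sum_f_R0 f N] has [N + 1] terms). *)
Lemma sum_scal_l (f : nat -> R) c N : sum_f_R0 (fun n => c * f n) N = c * sum_f_R0 f N.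
Proof. induction N; simpl; [ring | rewrite IHN; ring]. Qed.

Lemma sum_eq_ext (f g : nat -> R) N :
  (forall k, (k <= N)%nat -> f k = g k) -> sum_f_R0 f N = sum_f_R0 g N.
Proof.
  intros H. induction N; simpl; [apply H; lia|].
  rewrite IHN by (intros; apply H; lia). rewrite H by lia. reflexivity.
Qed.

Lemma sum_ge_last (f : nat -> R) N : (forall n, 0 <= f n) -> f N <= sum_f_R0 f N.
Proof.
  intros H. destruct N; simpl; [lra|].
  assert (0 <= sum_f_R0 f N) by (apply cond_pos_sum; auto). lra.
Qed.

Lemma sum_le_support (f : nat -> R) N N' :
  (forall n, 0 <= f n) -> (forall n, (N < n)%nat -> f n = 0) ->
  sum_f_R0 f N' <= sum_f_R0 f N.
Proof.
  intros H0 Hz. destruct (le_lt_dec N' N) as [H|H].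
  - clear Hz. induction H; [lra|]. simpl. specialize (H0 (S m)). lra.
  - induction H as [|m]; simpl; [rewrite (Hz (S N)) | rewrite (Hz (S m))]; lia || lra.
Qed.

Lemma sum_le_const (f : nat -> R) c N :
  (forall n, (n <= N)%nat -> f n <= c) -> sum_f_R0 f N <= INR (S N) * c.
Proof.
  intros H. induction N; [simpl; specialize (H 0%nat ltac:(lia)); lra|].
  assert (IH := IHN ltac:(intros; apply H; lia)). specialize (H (S N) ltac:(lia)).
  change (sum_f_R0 f (S N)) with (sum_f_R0 f N + f (S N)). rewrite (S_INR (S N)). lra.
Qed.

Lemma inf_sum_le (f g : nat -> R) lf lg :
  (forall n, f n <= g n) -> infinite_sum f lf -> infinite_sum g lg -> lf <= lg.
Proof.
  intros H Hf Hg.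
  apply (Rle_cv_lim (Un := fun N => sum_f_R0 f N) (Vn := fun N => sum_f_R0 g N)); auto.
  intros; apply sum_growing; auto.
Qed.

Lemma inf_sum_partial (f : nat -> R) l N :
  (forall n, 0 <= f n) -> infinite_sum f l -> sum_f_R0 f N <= l.
Proof. intros H Hf. apply sum_incr; auto. Qed.

Lemma inf_sum_ub (f : nat -> R) l B :
  (forall N, sum_f_R0 f N <= B) -> infinite_sum f l -> l <= B.
Proof.
  intros H Hf. apply (Rle_cv_lim (Un := fun N => sum_f_R0 f N) (Vn := fun _ => B)); auto.
  intros e He; exists 0%nat; intros; unfold Rdist; rewrite Rminus_diag, Rabs_R0; auto.
Qed.

Lemma inf_sum_scal (f : nat -> R) l c :
  infinite_sum f l -> infinite_sum (fun n => c * f n) (c * l).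
Proof.
  intros Hf e He.
  destruct (Req_dec c 0) as [Hc|Hc].
  - exists 0%nat; intros n _. unfold Rdist. subst c.
    rewrite sum_scal_l, !Rmult_0_l, Rminus_0_r, Rabs_R0; auto.
  - assert (Hca : 0 < Rabs c) by (apply Rabs_pos_lt; auto).
    destruct (Hf (e / Rabs c)) as [N HN]; [apply Rdiv_lt_0_compat; auto|].
    exists N; intros n Hn. specialize (HN n Hn). unfold Rdist in *.
    rewrite sum_scal_l, <- Rmult_minus_distr_l, Rabs_mult.
    apply Rmult_lt_reg_l with (/ Rabs c); [apply Rinv_0_lt_compat; auto|].
    rewrite <- Rmult_assoc, Rinv_l, Rmult_1_l by lra.
    unfold Rdiv in HN; lra.
Qed.

Section Tail.
Variables (q : nat -> R) (T : R -> R).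
Hypothesis Hq : is_pmf q.
Hypothesis HT : is_tail_v q T.

Lemma q_nonneg n : 0 <= q n.
Proof. destruct Hq; auto. Qed.

Lemma T_mono x y : x <= y -> T y <= T x.
Proof.
  intros Hxy. apply (inf_sum_le _ _ _ _) with (2 := HT y) (3 := HT x).
  intros n. assert (Hn := q_nonneg n).
  destruct (Rle_dec y (INR n)); destruct (Rle_dec x (INR n)); lra.
Qed.

Lemma q_le_T n : q n <= T (INR n).
Proof.
  set (f := fun k => if Rle_dec (INR n) (INR k) then q k else 0).
  assert (Hf : forall k, 0 <= f k).
  { intros k. unfold f. destruct (Rle_dec _ _); [apply q_nonneg | lra]. }
  apply Rle_trans with (sum_f_R0 f n); [|apply inf_sum_partial; auto; apply HT].
  eapply Rle_trans; [|apply (sum_ge_last f n Hf)].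
  unfold f. destruct (Rle_dec (INR n) (INR n)); lra.
Qed.

Lemma T_nonneg x : 0 <= T x.
Proof.
  destruct (nat_gt x) as [n Hn].
  eapply Rle_trans; [apply q_nonneg|]. eapply Rle_trans; [apply (q_le_T n)|].
  apply T_mono; lra.
Qed.

Lemma q_le_1 n : q n <= 1.
Proof.
  destruct Hq as [_ Hq1]. eapply Rle_trans; [apply q_le_T|].
  apply (inf_sum_le _ q) with (2 := HT _) (3 := Hq1).
  intros k. assert (Hk := q_nonneg k). destruct (Rle_dec _ _); lra.
Qed.
End Tail.

(** * Binomial tails and Chernoff bounds *)

Definition bterm (p : R) (n k : nat) : R := C n k * p ^ k * (1 - p) ^ (n - k).

Lemma bterm_nonneg p n k : 0 <= p <= 1 -> 0 <= bterm p n k.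
Proof.
  intros H. unfold bterm, C.
  repeat apply Rmult_le_pos; try (apply pow_le; lra); try apply pos_INR.
  left; apply Rinv_0_lt_compat, Rmult_lt_0_compat; apply INR_fact_lt_0.
Qed.

Lemma sum_bterm p n : sum_f_R0 (bterm p n) n = 1.
Proof. unfold bterm. rewrite <- binomial. replace (p + (1 - p)) with 1 by ring. apply pow1. Qed.

Lemma binom_tail_nonneg p n j : 0 <= p <= 1 -> 0 <= binom_tail p n j.
Proof.
  intros H. apply cond_pos_sum. intros k.
  destruct (Nat.leb j k); [apply (bterm_nonneg p n k H) | lra].
Qed.

Lemma binom_tail_le1 p n j : 0 <= p <= 1 -> binom_tail p n j <= 1.
Proof.
  intros H. rewrite <- (sum_bterm p n). apply sum_growing.
  intros k. assert (Hb := bterm_nonneg p n k H). unfold bterm in *.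
  destruct (Nat.leb j k); lra.
Qed.

(* Exponential moment bound: [E (e^{u Bin(n,p)}) = (1 + p (e^u - 1))^n]
   is at most [exp (n p (e^u - 1))]. *)
Lemma binom_mgf_le p n u : 0 <= p <= 1 ->
  sum_f_R0 (fun k => bterm p n k * exp (INR k * u)) n <= exp (INR n * p * (exp u - 1)).
Proof.
  intros Hp.
  replace (sum_f_R0 _ n) with ((1 + p * (exp u - 1)) ^ n).
  2:{ replace (1 + p * (exp u - 1)) with (p * exp u + (1 - p)) by ring.
      rewrite binomial. apply sum_eq_ext. intros k _. unfold bterm.
      rewrite Rpow_mult_distr, exp_pow_INR. ring. }
  rewrite Rmult_assoc. apply pow_le_exp.
  assert (0 < exp u) by apply exp_pos. nra.
Qed.

Lemma chernoff_up p n j lam : 0 <= p <= 1 -> 0 <= lam <= 1/2 ->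
  binom_tail p n j <= exp (- lam * INR j + INR n * p * (lam + 2 * lam ^ 2)).
Proof.
  intros Hp Hl.
  rewrite exp_plus.
  eapply Rle_trans with
    (exp (- lam * INR j) * sum_f_R0 (fun k => bterm p n k * exp (INR k * lam)) n).
  - rewrite <- sum_scal_l. apply sum_growing. intros k.
    assert (Hb := bterm_nonneg p n k Hp). fold (bterm p n k).
    destruct (Nat.leb j k) eqn:E.
    + apply Nat.leb_le, le_INR in E.
      assert (1 <= exp (- lam * INR j) * exp (INR k * lam)).
      { rewrite <- exp_plus. assert (H := exp_ineq1_le (- lam * INR j + INR k * lam)). nra. }
      nra.
    + apply Rmult_le_pos; [left; apply exp_pos|].
      apply Rmult_le_pos; [exact Hb | left; apply exp_pos].
  - apply Rmult_le_compat_l; [left; apply exp_pos|].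
    eapply Rle_trans; [apply binom_mgf_le; auto|]. apply exp_le_mono.
    assert (H := exp_quad lam ltac:(lra)).
    assert (0 <= INR n * p) by (apply Rmult_le_pos; [apply pos_INR | lra]).
    apply Rmult_le_compat_l; lra.
Qed.

Lemma chernoff_low p n j lam : 0 <= p <= 1 -> 0 <= lam <= 1/2 ->
  1 - binom_tail p n j <= exp (lam * INR j + INR n * p * (- lam + 2 * lam ^ 2)).
Proof.
  intros Hp Hl.
  assert (Hcompl : 1 - binom_tail p n j =
     sum_f_R0 (fun k => if Nat.leb j k then 0 else bterm p n k) n).
  { rewrite <- (sum_bterm p n). unfold binom_tail. fold (bterm p n).
    rewrite <- minus_sum. apply sum_eq_ext. intros k _.
    unfold bterm; destruct (Nat.leb j k); ring. }
  rewrite Hcompl, exp_plus.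
  eapply Rle_trans with
    (exp (lam * INR j) * sum_f_R0 (fun k => bterm p n k * exp (INR k * - lam)) n).
  - rewrite <- sum_scal_l. apply sum_growing. intros k.
    assert (Hb := bterm_nonneg p n k Hp).
    assert (Hj := exp_pos (lam * INR j)).
    assert (Hk := exp_pos (INR k * - lam)).
    destruct (Nat.leb j k) eqn:E.
    { apply Rmult_le_pos; [lra | apply Rmult_le_pos; [exact Hb | lra]]. }
    apply Nat.leb_gt, lt_INR in E.
    assert (1 <= exp (lam * INR j) * exp (INR k * - lam)).
    { rewrite <- exp_plus. assert (He := exp_ineq1_le (lam * INR j + INR k * - lam)). nra. }
    unfold bterm in *. nra.
  - apply Rmult_le_compat_l; [left; apply exp_pos|].
    eapply Rle_trans; [apply binom_mgf_le; auto|]. apply exp_le_mono.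
    assert (H := exp_quad (- lam) ltac:(lra)).
    assert (0 <= INR n * p) by (apply Rmult_le_pos; [apply pos_INR | lra]).
    apply Rmult_le_compat_l; [auto | nra].
Qed.

(** * A Baire-type lemma on [[1,2]] *)

Lemma nested_intervals (a b : nat -> R) :
  (forall k, a k <= a (S k)) -> (forall k, b (S k) <= b k) -> (forall k, a k <= b k) ->
  exists l, forall k, a k <= l <= b k.
Proof.
  intros Ha Hb Hab.
  assert (Hamono : forall k k', (k <= k')%nat -> a k <= a k').
  { intros k k' H. induction H; [lra | specialize (Ha m); lra]. }
  assert (Hbmono : forall k k', (k <= k')%nat -> b k' <= b k).
  { intros k k' H. induction H; [lra | specialize (Hb m); lra]. }
  assert (Hcross : forall i k, a i <= b k).
  { intros i k. destruct (le_lt_dec i k) as [H|H].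
    - specialize (Hamono i k H). specialize (Hab k). lra.
    - assert (H' : (k <= i)%nat) by lia. specialize (Hbmono k i H'). specialize (Hab i). lra. }
  destruct (growing_cv a Ha) as [l Hl].
  { exists (b 0%nat). intros x [k ->]. apply Hcross. }
  exists l. intros k. split; [apply growing_ineq; auto|].
  apply (Rle_cv_lim (Un := a) (Vn := fun _ => b k)); auto.
  intros e He; exists 0%nat; intros; unfold Rdist; rewrite Rminus_diag, Rabs_R0; auto.
Qed.

Lemma avoid_subinterval (P : R -> Prop) a b :
  (forall t, 1 <= t -> (forall eta, 0 < eta -> exists t', t <= t' <= t + eta /\ P t') -> P t) ->
  1 <= a < b -> (exists t, a <= t <= (a + b) / 2 /\ ~ P t) ->
  exists a' b', a <= a' < b' /\ b' < b /\ forall t, a' <= t <= b' -> ~ P t.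
Proof.
  intros Hclosed Hab [t [Ht HPt]].
  assert (Hfree : exists eta, 0 < eta /\ forall t', t <= t' <= t + eta -> ~ P t').
  { apply NNPP. intros Hno. apply HPt, Hclosed; [lra|].
    intros eta He. apply NNPP. intros Hno'. apply Hno. exists eta. split; auto.
    intros t' Ht' HP. apply Hno'. exists t'. auto. }
  destruct Hfree as [eta [He Heta]].
  exists t, (Rmin (t + eta) ((t + b) / 2)).
  assert (Rmin (t + eta) ((t + b) / 2) <= t + eta) by apply Rmin_l.
  assert (Rmin (t + eta) ((t + b) / 2) <= (t + b) / 2) by apply Rmin_r.
  assert (t < Rmin (t + eta) ((t + b) / 2)) by (apply Rmin_glb_lt; lra).
  repeat split; try lra. intros t' Ht'. apply Heta. lra.
Qed.

(* Baire category argument: if countably many right-closed predicates cover [[1,2]],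
   one of them contains a whole interval. *)
Lemma baire_interval (F : nat -> R -> Prop) :
  (forall t, 1 <= t <= 2 -> exists m, F m t) ->
  (forall m t, 1 <= t -> (forall eta, 0 < eta -> exists t', t <= t' <= t + eta /\ F m t') -> F m t) ->
  exists m a eta, 1 <= a /\ 0 < eta /\ a + eta <= 2 /\ forall t, a <= t <= a + eta -> F m t.
Proof.
  intros Hcover Hclosed. apply NNPP. intros Hno.
  set (step := fun (k : nat) (I J : R * R) =>
    fst I <= fst J < snd J /\ snd J < snd I /\ forall t, fst J <= t <= snd J -> ~ F k t).
  assert (Hstep : forall k I, 1 <= fst I < snd I -> snd I <= 2 -> exists J, step k I J).
  { intros k [a b] Hab Hb. simpl in *.
    destruct (avoid_subinterval (F k) a b (Hclosed k) Hab) as [a' [b' H]].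
    - apply NNPP. intros Hin. apply Hno. exists k, a, ((b - a) / 2).
      repeat split; try lra. intros t Ht. apply NNPP. intros HF. apply Hin. exists t.
      split; [lra | auto].
    - exists (a', b'). exact H. }
  set (inh := inhabits ((0, 0) : R * R)).
  set (I := fix I (k : nat) : R * R :=
     match k with O => (1, 2) | S k => epsilon inh (step k (I k)) end).
  assert (Hinv : forall k, (1 <= fst (I k) < snd (I k) /\ snd (I k) <= 2) /\ step k (I k) (I (S k))).
  { induction k as [|k [Hk [H1 H2]]].
    - assert (H0 : 1 <= fst (I 0%nat) < snd (I 0%nat) /\ snd (I 0%nat) <= 2) by (simpl; lra).
      split; auto. apply epsilon_spec, Hstep; tauto.
    - assert (H : 1 <= fst (I (S k)) < snd (I (S k)) /\ snd (I (S k)) <= 2) by lra.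
      split; auto. apply epsilon_spec, Hstep; tauto. }
  destruct (nested_intervals (fun k => fst (I k)) (fun k => snd (I k))) as [l Hl].
  - intros k. destruct (Hinv k) as [_ [H _]]. lra.
  - intros k. destruct (Hinv k) as [_ [_ [H _]]]. lra.
  - intros k. destruct (Hinv k) as [[H _] _]. lra.
  - assert (Hl0 := Hl 0%nat). simpl in Hl0.
    destruct (Hcover l ltac:(lra)) as [m Hm].
    destruct (Hinv m) as [_ [_ [_ Havoid]]].
    apply (Havoid l); [apply (Hl (S m)) | exact Hm].
Qed.

Lemma pow_cover eta r : 0 < eta -> 1 <= r ->
  exists k : nat, r <= (1 + eta) ^ k /\ 2 ^ k <= 2 * exp (ln 2 / ln (1 + eta) * ln r).
Proof.
  intros He Hr.
  assert (Hln : 0 < ln (1 + eta)) by (rewrite <- ln_1; apply ln_increasing; lra).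
  assert (Hl2 : 0 < ln 2) by (rewrite <- ln_1; apply ln_increasing; lra).
  set (x := ln r / ln (1 + eta)).
  assert (Hx : 0 <= x).
  { apply Rle_mult_inv_pos; auto. rewrite <- ln_1. apply ln_le_mono; lra. }
  destruct (archimed x) as [Hup1 Hup2].
  exists (Z.to_nat (up x)).
  assert (Hk : INR (Z.to_nat (up x)) = IZR (up x)).
  { rewrite INR_IZR_INZ, Z2Nat.id; auto. apply le_IZR; lra. }
  split.
  - rewrite <- (exp_ln r) by lra. rewrite <- (exp_ln (1 + eta)) at 1 by lra.
    rewrite exp_pow_INR, Hk. apply exp_le_mono.
    replace (ln r) with (x * ln (1 + eta)) by (unfold x; field; lra).
    apply Rmult_le_compat_r; lra.
  - rewrite <- (exp_ln 2) at 1 2 by lra. rewrite exp_pow_INR, Hk, <- exp_plus.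
    apply exp_le_mono.
    replace (ln 2 / ln (1 + eta) * ln r) with (x * ln 2) by (unfold x; field; lra).
    assert (IZR (up x) <= x + 1) by lra.
    apply Rle_trans with ((x + 1) * ln 2); [apply Rmult_le_compat_r; lra | right; ring].
Qed.

(** * Uniform convergence and Potter-type bounds for the slowly varying factor *)

Lemma ratio_close a b e : 0 < b -> Rabs (a / b - 1) < e -> (1 - e) * b < a < (1 + e) * b.
Proof.
  intros Hb H. apply Rabs_def2 in H.
  replace a with (a / b * b) by (field; lra). split; apply Rmult_lt_compat_r; lra.
Qed.

Section SlowVariation.
Variables (T L G : R -> R) (Y0 K : R).
Hypothesis HTm : forall x y, x <= y -> T y <= T x.
Hypothesis HT0 : forall x, 0 <= T x.
Hypothesis HGp : forall x, 0 < x -> 0 < G x.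
Hypothesis HTL : forall x, 0 < x -> T x = L x * G x.
Hypothesis HSV : slowly_varying L.
Hypothesis HY0 : 1 <= Y0.
Hypothesis HK : 0 < K.
Hypothesis HG : forall y n, Y0 <= y -> y / 2 <= n -> n <= y -> G n <= G y * exp (K * (y - n)).

Lemma L_nonneg x : 0 < x -> 0 <= L x.
Proof.
  intros Hx. assert (H := HTL x Hx). assert (H1 := HT0 x). assert (H2 := HGp x Hx).
  destruct (Rle_dec 0 (L x)); auto. nra.
Qed.

Lemma L_pos_large : exists M, forall x, M < x -> 0 < x -> 0 < L x.
Proof.
  destruct (HSV 1 ltac:(lra) (1/2) ltac:(lra)) as [M HM].
  exists M. intros x Hx Hx0. specialize (HM x Hx). rewrite Rmult_1_l in HM.
  destruct (L_nonneg x Hx0) as [H|H]; auto.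
  rewrite <- H in HM. unfold Rdiv in HM.
  rewrite Rmult_0_l, Rminus_0_l, Rabs_Ropp, Rabs_R1 in HM. lra.
Qed.

(* Monotonicity of [T] transfers to [L] up to the Lipschitz factor of [G]. *)
Lemma L_growth_right y y' : 0 < y -> y <= y' -> y' / 2 <= y -> Y0 <= y' ->
  L y' <= L y * exp (K * (y' - y)).
Proof.
  intros Hy Hyy' Hy2 HYy.
  assert (HG' := HG y' y HYy Hy2 Hyy').
  assert (HT := HTm y y' Hyy'). rewrite (HTL y), (HTL y') in HT by lra.
  assert (Hgy' := HGp y' ltac:(lra)). assert (HLy := L_nonneg y Hy).
  apply Rmult_le_reg_r with (G y'); auto.
  apply Rle_trans with (L y * G y); [lra|].
  rewrite Rmult_assoc, (Rmult_comm (exp _)).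
  apply Rmult_le_compat_l; auto.
Qed.

Section UniformConvergence.
Variable eps : R.
Hypothesis Heps : 0 < eps < 1.

Definition sv_lower (m : nat) (t : R) : Prop :=
  forall y, Y0 + INR m <= y -> (1 - eps) * L y <= L (t * y).

Lemma sv_lower_cover t : 0 < t -> exists m, sv_lower m t.
Proof.
  intros Ht. destruct (HSV t Ht eps ltac:(lra)) as [M HM].
  destruct (nat_gt M) as [m Hm]. exists m. intros y Hy.
  assert (0 <= INR m) by apply pos_INR.
  assert (HLt := L_nonneg (t * y) ltac:(apply Rmult_lt_0_compat; lra)).
  destruct (L_nonneg y ltac:(lra)) as [HL|HL]; [|rewrite <- HL; lra].
  assert (Hr := ratio_close _ _ _ HL (HM y ltac:(lra))). lra.
Qed.

(* [sv_lower m] is closed from the right, by [L_growth_right]: this replaces the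
   measurability of [L] in the classical proof of the uniform convergence theorem. *)
Lemma sv_lower_right_closed m t : 1 <= t ->
  (forall eta, 0 < eta -> exists t', t <= t' <= t + eta /\ sv_lower m t') -> sv_lower m t.
Proof.
  intros Ht H y Hy.
  assert (0 <= INR m) by apply pos_INR.
  assert (Hty : 0 < t * y) by (apply Rmult_lt_0_compat; lra).
  set (A := L (t * y)). assert (HA : 0 <= A) by (apply L_nonneg; auto).
  destruct (Rle_dec ((1 - eps) * L y) A) as [ok|nok]; auto. exfalso.
  set (d := (1 - eps) * L y - A). assert (Hd : 0 < d) by (unfold d; lra).
  set (D := 2 * K * y). assert (HD : 0 < D) by (unfold D; nra).
  (* a step [eta] so small that [exp (K eta y) - 1] cannot make up for the gap [d] *)
  set (eta := Rmin 1 (d / (D * (A + d + 1)))).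
  assert (He1 : eta <= 1) by apply Rmin_l.
  assert (HeD : D * eta <= d / (A + d + 1)).
  { apply Rle_trans with (D * (d / (D * (A + d + 1)))); [apply Rmult_le_compat_l; [lra | apply Rmin_r]|].
    right; field; lra. }
  assert (He0 : 0 < eta).
  { apply Rmin_glb_lt; [lra | apply Rdiv_lt_0_compat; [lra | apply Rmult_lt_0_compat; lra]]. }
  assert (HDe1 : D * eta < 1) by (apply Rle_lt_trans with (d / (A + d + 1)); auto;
                                  apply Rmult_lt_reg_r with (A + d + 1); [lra|]; field_simplify; lra).
  assert (HDeA : D * eta * A < d).
  { apply Rle_lt_trans with (d / (A + d + 1) * A); [apply Rmult_le_compat_r; auto|].
    apply Rmult_lt_reg_r with (A + d + 1); [lra|]. field_simplify; nra. }
  destruct (H eta He0) as [t' [Ht' Hlow]]. specialize (Hlow y Hy).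
  assert (Hgrowth := L_growth_right (t * y) (t' * y) Hty ltac:(nra) ltac:(nra) ltac:(nra)).
  set (u := K * (t' * y - t * y)) in Hgrowth.
  assert (Hu2 : 2 * u <= D * eta).
  { replace (2 * u) with (D * (t' - t)) by (unfold u, D; ring).
    apply Rmult_le_compat_l; lra. }
  assert (Hu : 0 <= u <= 1/2) by (split; [unfold u; apply Rmult_le_pos; nra | lra]).
  assert (Hexp := exp_lin u Hu).
  fold A in Hgrowth. unfold d in *. nra.
Qed.

Lemma sv_uniform : exists eta M, 0 < eta /\ 0 < M /\ forall y s, M <= y -> 1 <= s <= 1 + eta ->
   (1 - eps) * L y <= (1 + eps) * L (y * s).
Proof.
  destruct (baire_interval sv_lower) as [m [a [eta [Ha [He [Hae HF]]]]]].
  { intros t Ht. apply sv_lower_cover. lra. }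
  { intros m t Ht H. apply sv_lower_right_closed; auto. }
  destruct (HSV a ltac:(lra) eps ltac:(lra)) as [Ma HMa].
  exists (eta / 2), (2 * (Y0 + INR m) + 2 * Rabs Ma + 2).
  assert (0 <= INR m) by apply pos_INR. assert (Ma <= Rabs Ma) by apply RRle_abs.
  assert (0 <= Rabs Ma) by apply Rabs_pos.
  split; [lra|]. split; [lra|]. intros y s Hy Hs.
  (* write [y = a z]; compare [L y] and [L (y s) = L ((a s) z)] with [L z] *)
  set (z := y / a).
  assert (Hz1 : y / 2 <= z) by (unfold z; apply Rmult_le_compat_l; [lra | apply Rinv_le_contravar; lra]).
  assert (Hyz : y = a * z) by (unfold z; field; lra).
  specialize (HMa z ltac:(lra)). rewrite <- Hyz in HMa.
  destruct (L_nonneg z ltac:(lra)) as [HLz|HLz].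
  2:{ rewrite <- HLz in HMa. unfold Rdiv in HMa.
      rewrite Rinv_0, Rmult_0_r, Rminus_0_l, Rabs_Ropp, Rabs_R1 in HMa. lra. }
  assert (HLy := ratio_close _ _ _ HLz HMa).
  specialize (HF (a * s) ltac:(split; nra) z ltac:(lra)).
  replace (a * s * z) with (y * s) in HF by (rewrite Hyz; ring).
  assert ((1 - eps) * L y <= (1 - eps) * ((1 + eps) * L z)) by (apply Rmult_le_compat_l; lra).
  nra.
Qed.
End UniformConvergence.

Lemma T_uniform eps : 0 < eps < 1 -> exists eta M, 0 < eta /\ 0 < M /\
  forall y s, M <= y -> 1 <= s <= 1 + eta ->
   (1 - eps) * T y * G (y * s) <= (1 + eps) * T (y * s) * G y.
Proof.
  intros He. destruct (sv_uniform eps He) as [eta [M [H1 [H2 H3]]]].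
  exists eta, M. split; auto. split; auto. intros y s Hy Hs.
  specialize (H3 y s Hy Hs).
  rewrite (HTL y), (HTL (y * s)) by nra.
  assert (0 < G y * G (y * s)) by (apply Rmult_lt_0_compat; apply HGp; nra).
  replace ((1 - eps) * (L y * G y) * G (y * s)) with (((1 - eps) * L y) * (G y * G (y * s))) by ring.
  replace ((1 + eps) * (L (y * s) * G (y * s)) * G y) with (((1 + eps) * L (y * s)) * (G y * G (y * s))) by ring.
  apply Rmult_le_compat_r; lra.
Qed.

Lemma L_potter : exists eta M, 0 < eta /\ 0 < M /\ forall k y s, M <= y -> 1 <= s <= (1 + eta) ^ k ->
   L y <= 2 ^ k * L (y * s).
Proof.
  destruct (sv_uniform (1/3) ltac:(lra)) as [eta [M [H1 [H2 H3]]]].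
  exists eta, M. split; auto. split; auto.
  intro k. induction k as [|k IH]; intros y s Hy Hs.
  - simpl in Hs. replace s with 1 by lra. rewrite Rmult_1_r; lra.
  - assert (HLys : 0 <= L (y * s)) by (apply L_nonneg; simpl in Hs; nra).
    assert (H2k : 1 <= 2 ^ k) by (apply pow_R1_Rle; lra).
    destruct (Rle_dec s (1 + eta)) as [Hs1|Hs1].
    + specialize (H3 y s Hy ltac:(lra)). simpl. nra.
    + (* peel off one window: [y s = (y (1 + eta)) (s / (1 + eta))] *)
      simpl in Hs.
      assert (Hs' : 1 <= s / (1 + eta) <= (1 + eta) ^ k).
      { split; apply Rmult_le_reg_r with (1 + eta); try lra;
          unfold Rdiv; rewrite Rmult_assoc, Rinv_l; lra. }
      specialize (IH (y * (1 + eta)) (s / (1 + eta)) ltac:(nra) Hs').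
      replace (y * (1 + eta) * (s / (1 + eta))) with (y * s) in IH by (field; lra).
      specialize (H3 y (1 + eta) Hy ltac:(lra)). simpl. nra.
Qed.

Lemma T_compare : exists C0 M, 0 < C0 /\ 0 < M /\ forall n x, M <= n -> n <= x -> x <= 2 * n ->
   T n * G x <= C0 * T x * G n.
Proof.
  destruct L_potter as [eta [M [H1 [H2 H3]]]].
  destruct (pow_cover eta 2 H1 ltac:(lra)) as [k [Hk _]].
  exists (2 ^ k), M. split; [apply pow_lt; lra|]. split; auto.
  intros n x Hn Hnx Hx2.
  assert (Hs : 1 <= x / n <= 2).
  { split; apply Rmult_le_reg_r with n; try lra; unfold Rdiv; rewrite Rmult_assoc, Rinv_l; lra. }
  specialize (H3 k n (x / n) Hn ltac:(lra)). replace (n * (x / n)) with x in H3 by (field; lra).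
  rewrite (HTL n), (HTL x) by lra.
  assert (0 < G n * G x) by (apply Rmult_lt_0_compat; apply HGp; lra).
  replace (L n * G n * G x) with (L n * (G n * G x)) by ring.
  replace (2 ^ k * (L x * G x) * G n) with ((2 ^ k * L x) * (G n * G x)) by ring.
  apply Rmult_le_compat_r; lra.
Qed.

Lemma L_poly_lower : exists A c X, 0 < A /\ 0 < c /\ 1 <= X /\ forall x, X <= x ->
   c * exp (- (A * ln x)) <= L x.
Proof.
  destruct L_potter as [eta [M [H1 [H2 H3]]]].
  destruct L_pos_large as [M2 HM2].
  set (y0 := M + Rabs M2 + 1).
  assert (M2 <= Rabs M2) by apply RRle_abs. assert (0 <= Rabs M2) by apply Rabs_pos.
  assert (Hy0 : 0 < L y0) by (apply HM2; unfold y0; lra).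
  assert (Hln : 0 < ln (1 + eta)) by (rewrite <- ln_1; apply ln_increasing; lra).
  assert (Hl2 : 0 < ln 2) by (rewrite <- ln_1; apply ln_increasing; lra).
  set (A := ln 2 / ln (1 + eta)).
  exists A, (L y0 / 2), y0.
  split; [apply Rdiv_lt_0_compat; auto|]. split; [lra|]. split; [unfold y0; lra|].
  intros x Hx.
  assert (Hr : 1 <= x / y0).
  { apply Rmult_le_reg_r with y0; [unfold y0; lra|].
    unfold Rdiv; rewrite Rmult_assoc, Rinv_l; unfold y0 in *; lra. }
  destruct (pow_cover eta (x / y0) H1 Hr) as [k [Hk H2k]]. fold A in H2k.
  specialize (H3 k y0 (x / y0) ltac:(unfold y0; lra) ltac:(lra)).
  replace (y0 * (x / y0)) with x in H3 by (field; unfold y0; lra).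
  assert (Hlx : ln (x / y0) <= ln x).
  { apply ln_le_mono; [lra|]. unfold Rdiv.
    rewrite <- (Rmult_1_r x) at 2. apply Rmult_le_compat_l; [unfold y0 in *; lra|].
    rewrite <- Rinv_1. apply Rinv_le_contravar; unfold y0; lra. }
  assert (HA : 0 < A) by (apply Rdiv_lt_0_compat; auto).
  assert (H2x : 2 ^ k <= 2 * exp (A * ln x)).
  { eapply Rle_trans; [exact H2k|]. apply Rmult_le_compat_l; [lra|].
    apply exp_le_mono, Rmult_le_compat_l; lra. }
  assert (HLx := L_nonneg x ltac:(unfold y0 in *; lra)).
  assert (HE := exp_pos (A * ln x)).
  assert (L y0 <= 2 * exp (A * ln x) * L x) by (eapply Rle_trans; [exact H3 | apply Rmult_le_compat_r; auto]).
  rewrite exp_Ropp. apply Rmult_le_reg_r with (2 * exp (A * ln x)); [lra|].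
  replace (L y0 / 2 * / exp (A * ln x) * (2 * exp (A * ln x))) with (L y0) by (field; lra).
  lra.
Qed.
End SlowVariation.

(** * Concentration of the thinned variable *)

(* Chernoff exponents at [j = p x] and deviation [8 lam x]: for [n >= x + 8 lam x]
   (lower tail), for [n <= x / 2] (far upper tail), and for [x/2 <= n <= x - 8 lam x]
   where an extra growth [exp (kap (x - n))] with [kap <= p lam / 2] is absorbed. *)
Lemma chernoff_exponent_low p x lam n : 0 < p -> 0 <= x -> 0 < lam <= 1/8 ->
  x + 8 * lam * x <= n ->
  lam * (p * x) + n * p * (- lam + 2 * lam ^ 2) <= - (2 * p * lam ^ 2 * x).
Proof.
  intros Hp Hx Hl Hn.
  assert (0 <= (n - (x + 8 * lam * x)) * (p * (lam - 2 * lam ^ 2)))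
    by (apply Rmult_le_pos; [lra | apply Rmult_le_pos; [lra | nra]]).
  assert (0 <= p * lam ^ 2 * x * (1 - 4 * lam))
    by (repeat apply Rmult_le_pos; try lra; nra).
  nra.
Qed.

Lemma chernoff_exponent_far p x lam n : 0 < p -> 0 <= x -> 0 < lam <= 1/8 ->
  0 <= n <= x / 2 ->
  - lam * (p * x) + n * p * (lam + 2 * lam ^ 2) <= - (p * lam * x / 4).
Proof.
  intros Hp Hx Hl Hn.
  assert (n * p * (lam + 2 * lam ^ 2) <= x / 2 * p * (lam + lam / 4)).
  { assert (2 * lam ^ 2 <= lam / 4) by (simpl; nra).
    apply Rmult_le_compat; [nra | nra | apply Rmult_le_compat_r; lra | lra]. }
  assert (0 <= p * lam * x) by (repeat apply Rmult_le_pos; lra).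
  nra.
Qed.

Lemma chernoff_exponent_mid p x lam kap n : 0 < p -> 0 <= x -> 0 < lam <= 1/8 ->
  kap <= p * lam / 2 -> n <= x - 8 * lam * x ->
  kap * (x - n) + (- lam * (p * x) + n * p * (lam + 2 * lam ^ 2)) <= - (2 * p * lam ^ 2 * x).
Proof.
  intros Hp Hx Hl Hk Hn.
  assert (Hlx : 0 <= lam * x) by (apply Rmult_le_pos; lra).
  assert (Hplx : 0 <= p * lam ^ 2 * x) by (repeat apply Rmult_le_pos; try lra; nra).
  assert (H1 : (kap - lam * p) * (x - n) <= - (p * lam / 2) * (8 * lam * x)).
  { apply Rle_trans with (- (p * lam / 2) * (x - n)); [apply Rmult_le_compat_r; lra|].
    rewrite !Ropp_mult_distr_l_reverse. apply Ropp_le_contravar.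
    apply Rmult_le_compat_l; [nra | lra]. }
  assert (H2 : 2 * p * lam ^ 2 * n <= 2 * p * lam ^ 2 * x)
    by (apply Rmult_le_compat_l; [nra | lra]).
  assert (E : kap * (x - n) + (- lam * (p * x) + n * p * (lam + 2 * lam ^ 2))
              = (kap - lam * p) * (x - n) + 2 * p * lam ^ 2 * n) by ring.
  assert (E2 : - (p * lam / 2) * (8 * lam * x) = - (4 * (p * lam ^ 2 * x))) by field.
  lra.
Qed.

Section Concentration.
Variables (p : R) (q : nat -> R) (T : R -> R) (Tt : nat -> R).
Hypothesis Hp : 0 < p < 1.
Hypothesis Hq : is_pmf q.
Hypothesis HT : is_tail_v q T.
Hypothesis HTt : is_tail_vtilde q p Tt.

(* Lower bound: [vtilde >= j] as soon as [v >= x + 8 lam x] and [Bin(v,p)] does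
   not deviate below its mean. *)
Lemma Tt_lower (j : nat) (x lam : R) : INR j = p * x -> 0 <= x -> 0 < lam <= 1/8 ->
  (1 - exp (- (2 * p * lam ^ 2 * x))) * T (x + 8 * lam * x) <= Tt j.
Proof.
  intros Hj Hx Hl.
  set (rho := exp (- (2 * p * lam ^ 2 * x))).
  assert (H1 := inf_sum_scal _ _ (1 - rho) (HT (x + 8 * lam * x))).
  apply (inf_sum_le _ _ _ _) with (2 := H1) (3 := HTt j).
  intros n. cbv beta.
  assert (Hq0 := q_nonneg q Hq n).
  assert (Hb0 := binom_tail_nonneg p n j ltac:(lra)).
  assert (Hrho : 0 < rho) by apply exp_pos.
  destruct (Rle_dec (x + 8 * lam * x) (INR n)) as [Hn|Hn]; [|nra].
  assert (1 - binom_tail p n j <= rho).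
  { eapply Rle_trans; [apply (chernoff_low p n j lam); lra|]. apply exp_le_mono.
    rewrite Hj. apply chernoff_exponent_low; lra. }
  nra.
Qed.

Lemma Tt_split (j : nat) (y c : R) : 0 <= y -> 0 <= c ->
  (forall n : nat, INR n < y -> q n * binom_tail p n j <= c) ->
  Tt j <= T y + (y + 2) * c.
Proof.
  intros Hy Hc Hsmall.
  set (B := fun n => if Rle_dec y (INR n) then 0 else q n * binom_tail p n j).
  assert (HB0 : forall n, 0 <= B n).
  { intros n. unfold B. destruct (Rle_dec _ _); [lra|].
    apply Rmult_le_pos; [apply (q_nonneg q Hq) | apply binom_tail_nonneg; lra]. }
  destruct (nat_between y Hy) as [N [HN1 HN2]].
  assert (HBN : forall N', sum_f_R0 B N' <= (y + 2) * c).
  { intros N'. eapply Rle_trans; [apply (sum_le_support B N N' HB0)|].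
    - intros n Hn. unfold B. destruct (Rle_dec _ _) as [|Hc']; auto. exfalso. apply Hc'.
      apply lt_INR in Hn. lra.
    - apply Rle_trans with (INR (S N) * c).
      + apply sum_le_const. intros n _. unfold B.
        destruct (Rle_dec _ _) as [|Hn]; [auto | apply Hsmall; lra].
      + rewrite S_INR. apply Rmult_le_compat_r; lra. }
  apply inf_sum_ub with (2 := HTt j). intros N'.
  replace (sum_f_R0 (fun n => q n * binom_tail p n j) N') with
    (sum_f_R0 (fun n => if Rle_dec y (INR n) then q n * binom_tail p n j else 0) N' + sum_f_R0 B N').
  2:{ rewrite <- plus_sum. apply sum_eq_ext. intros k _. unfold B. destruct (Rle_dec _ _); ring. }
  assert (sum_f_R0 (fun n => if Rle_dec y (INR n) then q n * binom_tail p n j else 0) N' <= T y).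
  { set (qy := fun n => if Rle_dec y (INR n) then q n else 0).
    assert (Hqy : forall n, 0 <= qy n).
    { intros n. unfold qy. destruct (Rle_dec y (INR n)); [apply (q_nonneg q Hq) | lra]. }
    apply Rle_trans with (sum_f_R0 qy N'); [|apply (inf_sum_partial qy _ N' Hqy (HT y))].
    apply sum_growing. unfold qy. intros n. destruct (Rle_dec _ _); [|lra].
    assert (Hq0 := q_nonneg q Hq n). assert (binom_tail p n j <= 1) by (apply binom_tail_le1; lra).
    assert (0 <= binom_tail p n j) by (apply binom_tail_nonneg; lra). nra. }
  specialize (HBN N'). lra.
Qed.

(* Upper bound: [vtilde >= j] essentially requires [v >= x - 8 lam x]; the
   contribution of [v < x - 8 lam x] is controlled by Chernoff, provided [T] grows
   at most like [exp (kap (x - n))] below [x]. *)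
Lemma Tt_upper (j : nat) (x lam C0 kap : R) :
  INR j = p * x -> 0 < x -> 0 < lam <= 1/8 -> 0 < C0 -> kap <= p * lam / 2 ->
  (forall n : nat, x / 2 <= INR n -> INR n <= x - 8 * lam * x ->
      T (INR n) <= C0 * T x * exp (kap * (x - INR n))) ->
  Tt j <= T (x - 8 * lam * x)
          + (x + 2) * (C0 * T x * exp (- (2 * p * lam ^ 2 * x)) + exp (- (p * lam * x / 4))).
Proof.
  intros Hj Hx Hl HC Hk Hmid.
  set (w := 8 * lam * x). assert (Hw : 0 <= w <= x) by (unfold w; split; nra).
  assert (HTx := T_nonneg q T Hq HT x).
  set (c := C0 * T x * exp (- (2 * p * lam ^ 2 * x)) + exp (- (p * lam * x / 4))).
  assert (Hc1 : 0 <= C0 * T x * exp (- (2 * p * lam ^ 2 * x)))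
    by (apply Rmult_le_pos; [apply Rmult_le_pos | left; apply exp_pos]; lra).
  assert (Hc2 := exp_pos (- (p * lam * x / 4))).
  eapply Rle_trans; [apply (Tt_split j (x - w) c); unfold c; try lra|].
  2:{ apply Rplus_le_compat_l, Rmult_le_compat_r; unfold c; lra. }
  intros n Hn.
  assert (Hq0 := q_nonneg q Hq n). assert (Hb0 := binom_tail_nonneg p n j ltac:(lra)).
  assert (Hn0 : 0 <= INR n) by apply pos_INR.
  assert (Hup := chernoff_up p n j lam ltac:(lra) ltac:(lra)). rewrite Hj in Hup.
  destruct (Rle_dec (x / 2) (INR n)) as [Hn2|Hn2].
  - assert (q n * binom_tail p n j <= C0 * T x * exp (- (2 * p * lam ^ 2 * x))); [|unfold c; lra].
    eapply Rle_trans; [apply Rmult_le_compat; [auto | auto | |exact Hup]|].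
    { eapply Rle_trans; [apply (q_le_T q T Hq HT) | apply Hmid; unfold w in Hn; lra]. }
    rewrite Rmult_assoc, <- exp_plus. apply Rmult_le_compat_l; [apply Rmult_le_pos; lra|].
    apply exp_le_mono, chernoff_exponent_mid; unfold w in Hn; lra.
  - assert (q n * binom_tail p n j <= exp (- (p * lam * x / 4))); [|unfold c; lra].
    rewrite <- (Rmult_1_l (exp _)). apply Rmult_le_compat; auto; [apply (q_le_1 q T Hq HT)|].
    eapply Rle_trans; [exact Hup|]. apply exp_le_mono, chernoff_exponent_far; lra.
Qed.
End Concentration.

Lemma Rpower_pos x a : 0 < Rpower x a.
Proof. apply exp_pos. Qed.

Lemma Rpower_antitone_base x y a : 0 < x -> x <= y -> a <= 0 -> Rpower y a <= Rpower x a.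
Proof.
  intros Hx Hxy Ha. apply exp_le_mono.
  assert (ln x <= ln y) by (apply ln_le_mono; auto). nra.
Qed.

Lemma Rpower_le1 x a : 1 <= x -> a <= 0 -> Rpower x a <= 1.
Proof. intros Hx Ha. rewrite <- (Rpower_O x) by lra. apply Rle_Rpower; auto. Qed.

Lemma Rpower_neg1 y : 0 < y -> Rpower y (-1) = / y.
Proof. intros H. replace (-1) with (- (1)) by ring. rewrite Rpower_Ropp, Rpower_1; auto. Qed.

Definition ultimately (P : R -> Prop) : Prop := exists X, forall x, X <= x -> P x.

Lemma ev_and P Q : ultimately P -> ultimately Q -> ultimately (fun x => P x /\ Q x).
Proof.
  intros [X1 H1] [X2 H2]. exists (Rmax X1 X2). intros x Hx.
  split; [apply H1 | apply H2]; eapply Rle_trans; try exact Hx; [apply Rmax_l | apply Rmax_r].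
Qed.

Lemma ev_ge X0 : ultimately (fun x => X0 <= x).
Proof. exists X0; auto. Qed.

Lemma ev_mono (P Q : R -> Prop) : (forall x, P x -> Q x) -> ultimately P -> ultimately Q.
Proof. intros H [X HX]. exists X; auto. Qed.

Lemma ev_rpower_large th C : 0 < th -> ultimately (fun x => C <= Rpower x th).
Proof.
  intros Hth. set (b := Rabs C + 1).
  assert (Hb : 0 < b) by (unfold b; assert (0 <= Rabs C) by apply Rabs_pos; lra).
  exists (Rpower b (/ th) + 1). intros x Hx.
  assert (H0 := Rpower_pos b (/ th)).
  assert (H : Rpower (Rpower b (/ th)) th <= Rpower x th) by (apply Rle_Rpower_l; lra).
  rewrite Rpower_mult, Rinv_l, Rpower_1 in H by lra.
  assert (C <= Rabs C) by apply RRle_abs. unfold b in H. lra.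
Qed.

Lemma ev_rpower_small th e : th < 0 -> 0 < e -> ultimately (fun x => Rpower x th <= e).
Proof.
  intros Hth He. apply (ev_mono (fun x => / e <= Rpower x (- th))); [|apply ev_rpower_large; lra].
  intros x Hx. replace th with (- - th) by ring. rewrite Rpower_Ropp.
  assert (0 < / e) by (apply Rinv_0_lt_compat; auto).
  replace e with (/ / e) by (field; lra). apply Rinv_le_contravar; auto.
Qed.

Lemma ev_const_le_rpower th c C : 0 < th -> 0 < c -> ultimately (fun x => C <= c * Rpower x th).
Proof.
  intros Hth Hc. apply (ev_mono (fun x => C / c <= Rpower x th)); [|apply ev_rpower_large; auto].
  intros x Hx. apply Rmult_le_compat_l with (r := c) in Hx; [|lra].
  replace (c * (C / c)) with C in Hx by (field; lra). lra.
Qed.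

Lemma ev_ln_le_rpower th A c : 0 < th -> 0 < c -> ultimately (fun x => A * ln x <= c * Rpower x th).
Proof.
  intros Hth Hc. set (A' := Rabs A). assert (HA' : 0 <= A') by apply Rabs_pos.
  apply (ev_mono (fun x => 1 <= x /\ 2 * A' / (th * c) <= Rpower x (th / 2))).
  2:{ apply ev_and; [apply ev_ge | apply ev_rpower_large; lra]. }
  intros x [Hx1 Hx2].
  assert (Hln : 0 <= ln x) by (rewrite <- ln_1; apply ln_le_mono; lra).
  set (u := Rpower x (th / 2)). assert (Hu : 0 < u) by apply Rpower_pos.
  (* [ln x = (2/th) ln u <= (2/th) u] and [u^2 = x^th] *)
  assert (Hlnx : ln x = 2 / th * ln u) by (unfold u; rewrite ln_Rpower; field; lra).
  assert (Hlu : ln u <= u) by (assert (H := ln_le_sub1 u Hu); lra).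
  assert (Huu : Rpower x th = u * u) by (unfold u; rewrite <- Rpower_plus; f_equal; field).
  assert (A * ln x <= A' * ln x) by (apply Rmult_le_compat_r; auto; apply RRle_abs).
  assert (A' * ln x <= 2 * A' / th * u).
  { rewrite Hlnx. replace (A' * (2 / th * ln u)) with (2 * A' / th * ln u) by (field; lra).
    apply Rmult_le_compat_l; auto. apply Rle_mult_inv_pos; lra. }
  assert (2 * A' / th <= c * u).
  { apply Rmult_le_reg_r with (/ c); [apply Rinv_0_lt_compat; auto|].
    replace (c * u * / c) with u by (field; lra).
    replace (2 * A' / th * / c) with (2 * A' / (th * c)) by (field; lra). auto. }
  rewrite Huu. assert (2 * A' / th * u <= c * u * u) by (apply Rmult_le_compat_r; lra). lra.
Qed.

Lemma ev_linear_exp_small th c C e : 0 < th -> 0 < c -> 0 < C -> 0 < e ->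
  ultimately (fun x => (x + 2) * C * exp (- (c * Rpower x th)) <= e).
Proof.
  intros Hth Hc HC He.
  apply (ev_mono (fun x => (1 <= x /\ 1 * ln x <= (c / 2) * Rpower x th) /\
                           ln 3 + ln C - ln e <= (c / 2) * Rpower x th)).
  2:{ repeat apply ev_and; [apply ev_ge | apply ev_ln_le_rpower | apply ev_const_le_rpower]; lra. }
  intros x [[Hx1 Hx2] Hx3].
  assert (H3 : x + 2 <= exp (ln 3 + ln x)) by (rewrite exp_plus, exp_ln, exp_ln by lra; lra).
  replace e with (exp (ln e)) by (apply exp_ln; auto).
  replace C with (exp (ln C)) at 1 by (apply exp_ln; auto).
  eapply Rle_trans.
  { apply Rmult_le_compat_r; [left; apply exp_pos|].
    apply Rmult_le_compat_r; [left; apply exp_pos | exact H3]. }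
  rewrite <- !exp_plus. apply exp_le_mono. lra.
Qed.

Lemma ultimately_seq (P : R -> Prop) p : 0 < p -> ultimately P ->
  exists N, forall j, (N <= j)%nat -> P (INR j / p).
Proof.
  intros Hp [X HX]. destruct (nat_gt (Rabs X * p)) as [N HN].
  exists N. intros j Hj. apply HX. apply le_INR in Hj.
  assert (X <= Rabs X) by apply RRle_abs.
  apply Rmult_le_reg_r with p; [lra|]. unfold Rdiv. rewrite Rmult_assoc, Rinv_l by lra. nra.
Qed.

Lemma absorb_factor e A B Ga Gb : 0 < e <= 1/10 -> 0 <= B -> 0 < Gb ->
  (1 - e) * A * Gb <= (1 + e) * B * Ga -> Ga <= (1 + 2 * e) * Gb -> A <= (1 + 6 * e) * B.
Proof.
  intros He HB HGb H1 H2.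
  assert (H3 : (1 - e) * A * Gb <= (1 + e) * (1 + 2 * e) * B * Gb).
  { eapply Rle_trans; [exact H1|]. replace ((1 + e) * (1 + 2 * e) * B * Gb)
      with ((1 + e) * B * ((1 + 2 * e) * Gb)) by ring.
    apply Rmult_le_compat_l; [nra | auto]. }
  apply Rmult_le_reg_r in H3; auto.
  assert ((1 + e) * (1 + 2 * e) <= (1 - e) * (1 + 6 * e)) by nra.
  apply Rmult_le_reg_l with (1 - e); nra.
Qed.

Lemma ratio_from_bounds e A B : 0 < B -> (1 - e) * B <= A -> A <= (1 + e) * B ->
  Rabs (A / B - 1) <= e.
Proof.
  intros HB H1 H2.
  assert (H1' : 1 - e <= A / B) by (apply Rmult_le_reg_r with B; auto; unfold Rdiv;
                                    rewrite Rmult_assoc, Rinv_l; lra).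
  assert (H2' : A / B <= 1 + e) by (apply Rmult_le_reg_r with B; auto; unfold Rdiv;
                                    rewrite Rmult_assoc, Rinv_l; lra).
  apply Rabs_le; lra.
Qed.

(** * The ratio limit for a general regularly decaying tail *)

(* [T = L G] with [L] slowly varying, [log G] Lipschitz on dyadic windows with
   constant [K y^(-mu)], [mu > 1/2], and [G] decaying slower than [exp (- c x^ga)]
   for every [c > 0], where [ga = (1/2 + mu)/2] lies strictly between [1/2] and [mu].
   The proof uses concentration windows of width [w = x^ga] around [x = j / p]. *)
Section GeneralRatio.
Variables (p : R) (q : nat -> R) (T L G : R -> R) (Tt : nat -> R) (mu K Y0 : R).
Hypothesis Hp : 0 < p < 1.
Hypothesis Hq : is_pmf q.
Hypothesis HT : is_tail_v q T.
Hypothesis HTt : is_tail_vtilde q p Tt.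
Hypothesis HSV : slowly_varying L.
Hypothesis HGp : forall x, 0 < x -> 0 < G x.
Hypothesis HTL : forall x, 0 < x -> T x = L x * G x.
Hypothesis Hmu : 1/2 < mu <= 1.
Hypothesis HK : 0 < K.
Hypothesis HY0 : 1 <= Y0.
Hypothesis HG : forall y n, Y0 <= y -> y / 2 <= n -> n <= y ->
  G n <= G y * exp (K * Rpower y (- mu) * (y - n)).
Hypothesis HD : forall c, 0 < c ->
  ultimately (fun x => exp (- (c * Rpower x ((1/2 + mu) / 2))) <= G x).

Let ga := (1/2 + mu) / 2.
Let HTm := T_mono q T Hq HT.
Let HT0 := T_nonneg q T Hq HT.

(* Since [y^(-mu) <= 1], [G] satisfies the hypothesis of [SlowVariation]. *)
Lemma G_dyadic y n : Y0 <= y -> y / 2 <= n -> n <= y -> G n <= G y * exp (K * (y - n)).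
Proof.
  intros H1 H2 H3. eapply Rle_trans; [apply (HG y n H1 H2 H3)|].
  apply Rmult_le_compat_l; [left; apply HGp; lra|]. apply exp_le_mono.
  assert (Rpower y (- mu) <= 1) by (apply Rpower_le1; lra).
  assert (0 < Rpower y (- mu)) by apply Rpower_pos.
  apply Rmult_le_compat_r; [lra|]. rewrite <- (Rmult_1_r K) at 2.
  apply Rmult_le_compat_l; lra.
Qed.

(* [x^ga = x^(ga - 1) x]: the window is a vanishing fraction of [x]. *)
Lemma Rpower_ga_split x : 0 < x -> Rpower x ga = Rpower x (ga - 1) * x.
Proof. intros Hx. rewrite <- (Rpower_1 x) at 3 by lra. rewrite <- Rpower_plus. f_equal; ring. Qed.

Lemma G_window e : 0 < e <= 1/4 -> ultimately (fun x => forall d, 0 <= d <= Rpower x ga ->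
  G (x - d) <= (1 + 2 * e) * G x /\ G x <= (1 + 2 * e) * G (x + d)).
Proof.
  intros He.
  apply (ev_mono (fun x => (Y0 <= x /\ Rpower x (ga - 1) <= 1/2) /\ Rpower x (ga - mu) <= e / K)).
  2:{ repeat apply ev_and; [apply ev_ge | apply ev_rpower_small | apply ev_rpower_small];
      unfold ga; try lra. apply Rdiv_lt_0_compat; lra. }
  intros x [[Hx Hx1] Hx2] d Hd.
  assert (Hxp : 0 < x) by lra.
  assert (Hdx : d <= x / 2).
  { rewrite (Rpower_ga_split x Hxp) in Hd. assert (Rpower x (ga - 1) * x <= 1/2 * x) by
      (apply Rmult_le_compat_r; lra). lra. }
  assert (Hmu0 := Rpower_pos x (- mu)).
  assert (Hkd : K * Rpower x (- mu) * d <= e).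
  { apply Rle_trans with (K * Rpower x (- mu) * Rpower x ga);
      [apply Rmult_le_compat_l; [nra | lra]|].
    rewrite Rmult_assoc, <- Rpower_plus. replace (- mu + ga) with (ga - mu) by ring.
    apply Rmult_le_reg_l with (/ K); [apply Rinv_0_lt_compat; lra|].
    rewrite <- Rmult_assoc, Rinv_l, Rmult_1_l by lra. unfold Rdiv in Hx2. lra. }
  assert (Hfactor : forall u, 0 <= u <= e -> exp u <= 1 + 2 * e)
    by (intros u Hu; eapply Rle_trans; [apply exp_lin; lra | lra]).
  split.
  - eapply Rle_trans; [apply (HG x (x - d)); lra|]. rewrite Rmult_comm.
    apply Rmult_le_compat_r; [left; apply HGp; lra|]. apply Hfactor.
    replace (x - (x - d)) with d by ring.
    split; [apply Rmult_le_pos; [apply Rmult_le_pos|]; lra | auto].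
  - eapply Rle_trans; [apply (HG (x + d) x); lra|]. rewrite Rmult_comm.
    apply Rmult_le_compat_r; [left; apply HGp; lra|]. apply Hfactor.
    replace (x + d - x) with d by ring.
    assert (Rpower (x + d) (- mu) <= Rpower x (- mu)) by (apply Rpower_antitone_base; lra).
    assert (0 < Rpower (x + d) (- mu)) by apply Rpower_pos.
    split; [apply Rmult_le_pos; [apply Rmult_le_pos|]; lra|].
    eapply Rle_trans; [|exact Hkd]. apply Rmult_le_compat_r; [lra|]. apply Rmult_le_compat_l; lra.
Qed.

Lemma T_window e : 0 < e -> ultimately (fun x =>
  T x <= (1 + e) * T (x + Rpower x ga) /\ T (x - Rpower x ga) <= (1 + e) * T x).
Proof.
  intros He. set (e1 := Rmin (1/10) (e / 6)).
  assert (He1 : 0 < e1 <= 1/10 /\ 6 * e1 <= e).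
  { unfold e1. split; [split; [apply Rmin_glb_lt | apply Rmin_l]; lra|].
    assert (Rmin (1/10) (e/6) <= e / 6) by apply Rmin_r. lra. }
  destruct (T_uniform T L G Y0 K HTm HT0 HGp HTL HSV HY0 HK G_dyadic e1 ltac:(lra))
    as [eta [M [Heta [HM Hunif]]]].
  apply (ev_mono (fun x => ((2 * M + 1 <= x /\ Rpower x (ga - 1) <= Rmin (1/2) (eta / 2)) /\
    forall d, 0 <= d <= Rpower x ga ->
      G (x - d) <= (1 + 2 * e1) * G x /\ G x <= (1 + 2 * e1) * G (x + d)))).
  2:{ repeat apply ev_and; [apply ev_ge | apply ev_rpower_small | apply G_window];
      unfold ga; try lra. apply Rmin_glb_lt; lra. }
  intros x [[Hx Hx1] HGw].
  assert (Hxp : 0 < x) by lra. set (w := Rpower x ga).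
  assert (Hmin1 := Rmin_l (1/2) (eta / 2)). assert (Hmin2 := Rmin_r (1/2) (eta / 2)).
  assert (Hw0 : 0 < w) by apply Rpower_pos.
  assert (Hwx : w = Rpower x (ga - 1) * x) by apply Rpower_ga_split, Hxp.
  assert (Hw2 : w <= x / 2) by nra.
  assert (Hweta : w <= eta / 2 * x) by nra.
  destruct (HGw w) as [HGl HGr]; [split; [lra | right; reflexivity]|].
  split.
  - (* compare [x] with [x (1 + x^(ga-1)) = x + w] *)
    assert (Hs : 1 <= 1 + Rpower x (ga - 1) <= 1 + eta) by (assert (0 < Rpower x (ga - 1)) by apply Rpower_pos; lra).
    assert (H := Hunif x (1 + Rpower x (ga - 1)) ltac:(lra) Hs).
    replace (x * (1 + Rpower x (ga - 1))) with (x + w) in H by (rewrite Hwx; ring).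
    assert (HT6 := absorb_factor e1 (T x) (T (x + w)) (G x) (G (x + w)) ltac:(lra) (HT0 _)
                    ltac:(apply HGp; lra) H HGr).
    assert (0 <= T (x + w)) by apply HT0. nra.
  - (* compare [x - w] with [(x - w) (x / (x - w)) = x] *)
    assert (Hs : 1 <= x / (x - w) <= 1 + eta).
    { split; apply Rmult_le_reg_r with (x - w); try lra; unfold Rdiv;
        rewrite Rmult_assoc, Rinv_l by lra; nra. }
    assert (H := Hunif (x - w) (x / (x - w)) ltac:(lra) Hs).
    replace ((x - w) * (x / (x - w))) with x in H by (field; lra).
    assert (HT6 := absorb_factor e1 (T (x - w)) (T x) (G (x - w)) (G x) ltac:(lra) (HT0 _)
                    ltac:(apply HGp; lra) H HGl).
    assert (0 <= T x) by apply HT0. nra.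
Qed.

Lemma T_mid_growth : exists C0, 0 < C0 /\ ultimately (fun x => forall n : nat,
  x / 2 <= INR n -> INR n <= x -> T (INR n) <= C0 * T x * exp (K * Rpower x (- mu) * (x - INR n))).
Proof.
  destruct (T_compare T L G Y0 K HTm HT0 HGp HTL HSV HY0 HK G_dyadic) as [C0 [M [HC0 [HM Hcmp]]]].
  exists C0. split; auto. exists (2 * M + Y0). intros x Hx n Hn1 Hn2.
  assert (HGx : 0 < G x) by (apply HGp; lra).
  assert (Hc := Hcmp (INR n) x ltac:(lra) Hn2 ltac:(lra)).
  assert (Hg := HG x (INR n) ltac:(lra) Hn1 Hn2).
  apply Rmult_le_reg_r with (G x); auto.
  eapply Rle_trans; [exact Hc|].
  replace (C0 * T x * exp (K * Rpower x (- mu) * (x - INR n)) * G x)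
    with (C0 * T x * (G x * exp (K * Rpower x (- mu) * (x - INR n)))) by ring.
  apply Rmult_le_compat_l; auto. apply Rmult_le_pos; [lra | apply HT0].
Qed.

Lemma T_subexp_lower c : 0 < c -> ultimately (fun x => exp (- (c * Rpower x ga)) <= T x).
Proof.
  intros Hc.
  destruct (L_poly_lower T L G Y0 K HTm HT0 HGp HTL HSV HY0 HK G_dyadic)
    as [A [c0 [X [HA [Hc0 [HX Hlow]]]]]].
  assert (Hga : 0 < ga) by (unfold ga; lra).
  apply (ev_mono (fun x => ((X <= x /\ A * ln x <= c / 4 * Rpower x ga) /\
    - ln c0 <= c / 4 * Rpower x ga) /\ exp (- (c / 2 * Rpower x ga)) <= G x)).
  2:{ repeat apply ev_and; [apply ev_ge | apply ev_ln_le_rpower | apply ev_const_le_rpower | apply HD];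
      lra. }
  intros x [[[Hx1 Hx2] Hx3] Hx4].
  rewrite (HTL x) by lra.
  assert (HL := Hlow x Hx1).
  replace (exp (- (c * Rpower x ga))) with (exp (- (c / 2 * Rpower x ga)) * exp (- (c / 2 * Rpower x ga)))
    by (rewrite <- exp_plus; f_equal; field).
  apply Rmult_le_compat; [left; apply exp_pos | left; apply exp_pos | | exact Hx4].
  eapply Rle_trans; [|exact HL].
  rewrite <- (exp_ln c0) at 1 by auto. rewrite <- exp_plus. apply exp_le_mono. lra.
Qed.

(* The Chernoff parameter [lam] with deviation [8 lam x = x^ga]. *)
Definition window_lam (x : R) : R := Rpower x (ga - 1) / 8.

Lemma window_lam_facts x : 1 <= x -> Rpower x (ga - 1) <= 1 ->
  0 < window_lam x <= 1/8 /\ 8 * window_lam x * x = Rpower x ga /\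
  2 * p * window_lam x ^ 2 * x = p / 32 * Rpower x (2 * ga - 1) /\
  p * window_lam x * x / 4 = p / 32 * Rpower x ga.
Proof.
  intros Hx Hx1. unfold window_lam.
  assert (Hpos := Rpower_pos x (ga - 1)).
  assert (Hw : 8 * (Rpower x (ga - 1) / 8) * x = Rpower x ga)
    by (rewrite (Rpower_ga_split x) by lra; field).
  split; [lra|]. split; [auto|]. split.
  - replace (2 * ga - 1) with ((ga - 1) + (ga - 1) + 1) by ring.
    rewrite !Rpower_plus, Rpower_1 by lra. field.
  - rewrite <- Hw. field.
Qed.

Lemma Tt_lower_asymp e : 0 < e ->
  ultimately (fun x => forall j : nat, INR j = p * x -> (1 - e) * T x <= Tt j).
Proof.
  intros He.
  apply (ev_mono (fun x => ((1 <= x /\ Rpower x (ga - 1) <= 1) /\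
    (x + 2) * 1 * exp (- (p / 32 * Rpower x (2 * ga - 1))) <= e / 2) /\
    (T x <= (1 + e / 2) * T (x + Rpower x ga) /\ T (x - Rpower x ga) <= (1 + e / 2) * T x))).
  2:{ apply ev_and; [apply ev_and; [apply ev_and; [apply ev_ge | apply ev_rpower_small]
                                    | apply ev_linear_exp_small] | apply T_window];
      unfold ga; lra. }
  intros x [[[Hx Hx1] Hrho] [HTw _]] j Hj.
  destruct (window_lam_facts x Hx Hx1) as [Hlam [Hw [Hr _]]].
  assert (Hlow := Tt_lower p q T Tt Hp Hq HT HTt j x (window_lam x) Hj ltac:(lra) Hlam).
  rewrite Hw, Hr in Hlow.
  set (rho := exp (- (p / 32 * Rpower x (2 * ga - 1)))) in *.
  assert (Hrpos : 0 < rho) by (unfold rho; apply exp_pos).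
  assert (Hrho' : rho <= e / 2).
  { apply Rle_trans with ((x + 2) * 1 * rho); [|exact Hrho].
    rewrite Rmult_1_r. rewrite <- (Rmult_1_l rho) at 1. apply Rmult_le_compat_r; lra. }
  assert (Hrho1 : rho < 1).
  { assert (0 < p / 32 * Rpower x (2 * ga - 1)) by (apply Rmult_lt_0_compat; [lra | apply Rpower_pos]).
    unfold rho. apply Rlt_le_trans with (exp 0); [apply exp_increasing; lra | rewrite exp_0; lra]. }
  assert (HTw0 := HT0 (x + Rpower x ga)). assert (HTx0 := HT0 x).
  eapply Rle_trans; [|exact Hlow].
  destruct (Rle_dec e 1); nra.
Qed.

(* The Lipschitz rate [K x^(-mu)] of [log G] is small against the Chernoff rate
   [p lam]; this is where [ga > 1 - mu] is used. *)
Lemma lipschitz_rate_small x : 16 * K / p <= Rpower x (ga + mu - 1) ->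
  K * Rpower x (- mu) <= p * window_lam x / 2.
Proof.
  intros HK16. unfold window_lam. assert (Hm := Rpower_pos x (- mu)).
  apply Rmult_le_compat_r with (r := Rpower x (- mu)) in HK16; [|lra].
  rewrite <- Rpower_plus in HK16. replace (ga + mu - 1 + - mu) with (ga - 1) in HK16 by ring.
  replace (p * (Rpower x (ga - 1) / 8) / 2) with (p / 16 * Rpower x (ga - 1)) by field.
  apply Rmult_le_reg_l with (16 / p); [apply Rdiv_lt_0_compat; lra|].
  replace (16 / p * (p / 16 * Rpower x (ga - 1))) with (Rpower x (ga - 1)) by (field; lra).
  replace (16 / p * (K * Rpower x (- mu))) with (16 * K / p * Rpower x (- mu)) by (field; lra).
  auto.
Qed.

(* Upper half: [P(vtilde >= j) <= (1 + e) P(v >= j / p)] for large [j]; the error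
   terms of [Tt_upper] are negligible by [T_subexp_lower]. *)
Lemma Tt_upper_asymp e : 0 < e ->
  ultimately (fun x => forall j : nat, INR j = p * x -> Tt j <= (1 + e) * T x).
Proof.
  intros He.
  destruct T_mid_growth as [C0 [HC0 Hmid]].
  assert (Hga : 0 < ga + mu - 1) by (unfold ga; lra).
  apply (ev_mono (fun x => (((1 <= x /\ Rpower x (ga - 1) <= 1) /\ 16 * K / p <= Rpower x (ga + mu - 1)) /\
    ((x + 2) * C0 * exp (- (p / 32 * Rpower x (2 * ga - 1))) <= e / 3 /\
     (x + 2) * 1 * exp (- (p / 64 * Rpower x ga)) <= e / 3)) /\
    ((T x <= (1 + e / 3) * T (x + Rpower x ga) /\ T (x - Rpower x ga) <= (1 + e / 3) * T x) /\
     (exp (- (p / 64 * Rpower x ga)) <= T x /\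
      forall n : nat, x / 2 <= INR n -> INR n <= x ->
        T (INR n) <= C0 * T x * exp (K * Rpower x (- mu) * (x - INR n)))))).
  2:{ apply ev_and; apply ev_and.
      - apply ev_and; [apply ev_and; [apply ev_ge | apply ev_rpower_small] | apply ev_rpower_large];
          unfold ga; lra.
      - apply ev_and; apply ev_linear_exp_small; unfold ga; lra.
      - apply T_window; lra.
      - apply ev_and; [apply T_subexp_lower; lra | exact Hmid]. }
  intros x [[[[Hx Hx1] HK16] [Hsm1 Hsm2]] [[_ HTw] [HTlow HTmid]]] j Hj.
  destruct (window_lam_facts x Hx Hx1) as [Hlam [Hw [Hr He4]]].
  set (kap := K * Rpower x (- mu)).
  assert (Hkap : kap <= p * window_lam x / 2) by (apply lipschitz_rate_small; auto).
  assert (Hup := Tt_upper p q T Tt Hp Hq HT HTt j x (window_lam x) C0 kap Hj ltac:(lra) Hlam HC0 Hkap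
    ltac:(intros n Hn1 Hn2; apply HTmid; [auto | rewrite Hw in Hn2;
          assert (0 < Rpower x ga) by apply Rpower_pos; lra])).
  rewrite Hw, Hr, He4 in Hup.
  assert (HTx0 := HT0 x).
  assert (Herr1 : (x + 2) * (C0 * T x * exp (- (p / 32 * Rpower x (2 * ga - 1)))) <= e / 3 * T x).
  { replace ((x + 2) * (C0 * T x * exp (- (p / 32 * Rpower x (2 * ga - 1)))))
      with ((x + 2) * C0 * exp (- (p / 32 * Rpower x (2 * ga - 1))) * T x) by ring.
    apply Rmult_le_compat_r; auto. }
  assert (Herr2 : (x + 2) * exp (- (p / 32 * Rpower x ga)) <= e / 3 * T x).
  { replace (exp (- (p / 32 * Rpower x ga)))
      with (exp (- (p / 64 * Rpower x ga)) * exp (- (p / 64 * Rpower x ga)))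
      by (rewrite <- exp_plus; f_equal; field).
    rewrite <- Rmult_assoc. rewrite Rmult_1_r in Hsm2.
    apply Rmult_le_compat; [apply Rmult_le_pos; [lra | left; apply exp_pos]
                           | left; apply exp_pos | exact Hsm2 | exact HTlow]. }
  lra.
Qed.

Theorem general_ratio : Un_cv (fun j => Rabs (Tt j / T (INR j / p) - 1)) 0.
Proof.
  intros eps Heps.
  destruct (ultimately_seq _ p ltac:(lra)
    (ev_and _ _ (ev_and _ _ (Tt_lower_asymp (eps / 2) ltac:(lra)) (Tt_upper_asymp (eps / 2) ltac:(lra)))
       (T_subexp_lower 1 ltac:(lra)))) as [N HN].
  exists N. intros j Hj. destruct (HN j Hj) as [[Hlow Hupp] Hpos].
  assert (Hjx : INR j = p * (INR j / p)) by (field; lra).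
  assert (Hratio := ratio_from_bounds (eps / 2) (Tt j) (T (INR j / p))
    (Rlt_le_trans _ _ _ (exp_pos _) Hpos) (Hlow j Hjx) (Hupp j Hjx)).
  unfold Rdist. rewrite Rminus_0_r, Rabs_Rabsolu. lra.
Qed.
End GeneralRatio.

(** * The two decay regimes *)

Lemma ln_dyadic_increment y n : 0 < n -> y / 2 <= n <= y ->
  ln y - ln n <= 2 * Rpower y (-1) * (y - n).
Proof.
  intros Hn Hyn. rewrite Rpower_neg1 by lra.
  assert (Hl := ln_le_sub1 (y / n) ltac:(apply Rdiv_lt_0_compat; lra)).
  unfold Rdiv in Hl. rewrite ln_mult, ln_Rinv in Hl by (try apply Rinv_0_lt_compat; lra).
  eapply Rle_trans; [exact Hl|].
  replace (y * / n - 1) with ((y - n) / n) by (field; lra).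
  apply Rmult_le_reg_r with (n * y); [nra|].
  replace ((y - n) / n * (n * y)) with ((y - n) * y) by (field; lra).
  replace (2 * / y * (y - n) * (n * y)) with ((y - n) * (2 * n)) by (field; lra).
  apply Rmult_le_compat_l; lra.
Qed.

Lemma rpower_dyadic_increment be y n : 0 < be < 1 -> 0 < n -> y / 2 <= n <= y ->
  Rpower y be - Rpower n be <= 2 * Rpower y (be - 1) * (y - n).
Proof.
  intros Hbe Hn Hyn.
  assert (Hsplit : Rpower y be = Rpower n be * Rpower (y / n) be).
  { rewrite Rpower_mult_distr by (try apply Rdiv_lt_0_compat; lra). f_equal. field. lra. }
  (* [(y/n)^be <= y/n], hence [y^be - n^be <= n^(be-1) (y - n)] *)
  assert (Hr : Rpower (y / n) be <= y / n).
  { rewrite <- (Rpower_1 (y / n)) at 2 by (apply Rdiv_lt_0_compat; lra).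
    apply Rle_Rpower; [|lra]. apply Rmult_le_reg_r with n; [lra|].
    unfold Rdiv. rewrite Rmult_assoc, Rinv_l; lra. }
  assert (Hnb : Rpower n be * (y / n) - Rpower n be = Rpower n (be - 1) * (y - n)).
  { replace (be - 1) with (be + -1) by ring. rewrite Rpower_plus, Rpower_neg1 by lra. field. lra. }
  (* [n^(be-1) <= (y/2)^(be-1) = 2^(1-be) y^(be-1) <= 2 y^(be-1)] *)
  assert (Hn2 : Rpower n (be - 1) <= 2 * Rpower y (be - 1)).
  { eapply Rle_trans; [apply (Rpower_antitone_base (y / 2)); lra|].
    unfold Rdiv. rewrite <- Rpower_mult_distr, Rmult_comm by lra.
    apply Rmult_le_compat_r; [left; apply Rpower_pos|].
    replace (Rpower (/ 2) (be - 1)) with (Rpower 2 (1 - be))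
      by (unfold Rpower; rewrite ln_Rinv by lra; f_equal; ring).
    eapply Rle_trans; [apply (Rle_Rpower 2 (1 - be) 1); lra | rewrite Rpower_1; lra]. }
  assert (Hpos := Rpower_pos n be).
  assert (Rpower n be * Rpower (y / n) be <= Rpower n be * (y / n)) by (apply Rmult_le_compat_l; lra).
  assert (Rpower n (be - 1) * (y - n) <= 2 * Rpower y (be - 1) * (y - n)) by (apply Rmult_le_compat_r; lra).
  lra.
Qed.

Lemma ratio_regularly_varying p q T Tt a L :
  0 < p < 1 -> is_pmf q -> is_tail_v q T -> is_tail_vtilde q p Tt ->
  1 < a -> slowly_varying L -> (forall x, 0 < x -> T x = L x * Rpower x (- a)) ->
  Un_cv (fun j => Rabs (Tt j / T (INR j / p) - 1)) 0.
Proof.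
  intros Hp Hq HT HTt Ha HSV HTL.
  apply (general_ratio p q T L (fun x => Rpower x (- a)) Tt 1 (2 * a) 1); auto; try lra.
  - intros; apply Rpower_pos.
  - intros y n Hy Hn1 Hn2. unfold Rpower at 1 2. rewrite <- exp_plus. apply exp_le_mono.
    assert (H := ln_dyadic_increment y n ltac:(lra) ltac:(lra)).
    assert (a * (ln y - ln n) <= a * (2 * Rpower y (-1) * (y - n))) by (apply Rmult_le_compat_l; lra).
    replace (- (1)) with (-1) by ring. lra.
  - intros c Hc. replace ((1 / 2 + 1) / 2) with (3 / 4) by field.
    apply (ev_mono (fun x => a * ln x <= c * Rpower x (3 / 4))); [|apply ev_ln_le_rpower; lra].
    intros x Hx. apply exp_le_mono. lra.
Qed.

Lemma ratio_stretched_exponential p q T Tt be de L :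
  0 < p < 1 -> is_pmf q -> is_tail_v q T -> is_tail_vtilde q p Tt ->
  0 < be < 1/2 -> 0 < de -> slowly_varying L ->
  (forall x, 0 < x -> T x = L x * exp (- de * Rpower x be)) ->
  Un_cv (fun j => Rabs (Tt j / T (INR j / p) - 1)) 0.
Proof.
  intros Hp Hq HT HTt Hb Hd HSV HTL.
  apply (general_ratio p q T L (fun x => exp (- de * Rpower x be)) Tt (1 - be) (2 * de) 1); auto; try lra.
  - intros; apply exp_pos.
  - intros y n Hy Hn1 Hn2. rewrite <- exp_plus. apply exp_le_mono.
    assert (H := rpower_dyadic_increment be y n ltac:(lra) ltac:(lra) ltac:(lra)).
    replace (- (1 - be)) with (be - 1) by ring.
    assert (de * (Rpower y be - Rpower n be) <= de * (2 * Rpower y (be - 1) * (y - n)))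
      by (apply Rmult_le_compat_l; lra).
    lra.
  - intros c Hc. set (ga := (1 / 2 + (1 - be)) / 2).
    apply (ev_mono (fun x => de * 1 <= c * Rpower x (ga - be))); [|apply ev_const_le_rpower; unfold ga; lra].
    intros x Hx. apply exp_le_mono.
    assert (Rpower x ga = Rpower x be * Rpower x (ga - be)) by (rewrite <- Rpower_plus; f_equal; ring).
    assert (0 < Rpower x be) by apply Rpower_pos. nra.
Qed.

Theorem mainTheorem11 (p : R) (q : nat -> R) (T : R -> R) (Tt : nat -> R) :
  0 < p < 1 ->
  is_pmf q ->
  is_tail_v q T ->
  is_tail_vtilde q p Tt ->
  ((exists (a : R) (L : R -> R), 1 < a /\ slowly_varying L /\
       forall x : R, 0 < x -> T x = L x * Rpower x (- a))
   \/
   (exists (beta delta : R) (L : R -> R),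
       0 < beta < 1 / 2 /\ 0 < delta /\ slowly_varying L /\
       forall x : R, 0 < x -> T x = L x * exp (- delta * Rpower x beta))) ->
  Un_cv (fun j : nat => Rabs (Tt j / T (INR j / p) - 1)) 0.
Proof.
  intros Hp Hq HT HTt [[a [L [Ha [HL HTL]]]] | [be [de [L [Hb [Hd [HL HTL]]]]]]].
  - exact (ratio_regularly_varying p q T Tt a L Hp Hq HT HTt Ha HL HTL).
  - exact (ratio_stretched_exponential p q T Tt be de L Hp Hq HT HTt Hb Hd HL HTL).
Qed.
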